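(* Let $T$ be a monoid and $(X,\cdot)$ an order-preserving left action of $T$ on a semilattice $X$ with identity. Then the $*$-left Ehresmann monoid $\mathcal{P}_\ell(T,X)$ has proper basis $H^{\mathcal{P}}=\{te:t\in T,e\in X\}$. Moreover, for any $\alpha\in\mathcal{P}_\ell(T,X)$ with $H^{\mathcal{P}}$-canonical form $\alpha=h_1\cdots h_n$, we have $\alpha^+=h_1^+$ and $\alpha^*=h_n^*$.
   Context: A semilattice is a commutative semigroup of idempotents, ordered by $e\le f$ iff $ef=e$. An order-preserving left action satisfies $1_T\cdot x=x$, $s\cdot(t\cdot x)=st\cdot x$, $x\le y\Rightarrow t\cdot x\le t\cdot y$. Construction: let $T*X$ be the semigroup free product; it acts on $X$ with elements of $X$ acting by multiplication; put $\omega^+=\omega\cdot1_X$; let $\sim$ be the semigroup congruence generated by $\{(\alpha^+\alpha,\alpha)\}\cup\{(1_T,1_X)\}$ and $\mathcal{P}_\ell(T,X)=(T*X)/\sim$ with $[\alpha]^+=[\alpha^+]$; identify $X$ and $T$ with their (injective) images $\{[x]\}$, $\{[t]\}$. It is known that $\mathcal{P}_\ell(T,X)$ is left Ehresmann with projections $X$, generated by $X\cup T$, with unique $T$-normal forms ($t_0e_1t_1\cdots e_nt_n$, $n\ge0$, $e_i\in X\setminus\{1\}$, $t_1,\dots,t_{n-1}\in T\setminus\{1\}$, $e_i<(t_ie_{i+1}\cdots e_nt_n)^+$), and each $\sigma$-class contains exactly one element of $T$. It becomes $*$-left Ehresmann via $a^*=e_n$ if $n\ge1$ and $t_n=1$ in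 the $T$-normal form, $a^*=1$ otherwise. A $*$-left Ehresmann monoid is a monoid with unary operations $+,*$ satisfying $x^+x=x$, $(x^+y^+)^+=x^+y^+$, $x^+y^+=y^+x^+$, $(xy)^+=(xy^+)^+$, $xx^*=x$, $(x^* )^*=x^*$, $x^*y^*=y^*x^*$, $(xy^* )^*y^*=(xy^* )^*$, $(x^* )^+=x^*$, $(x^+)^*=x^+$; $E=\{a^+\}=\{a^*\}$; $\sigma$ is the least monoid congruence containing $E\times E$. $H\subseteq M$ is atomic if: (H1) $E\subseteq H$; (H2) $h\in H,e\in E$ imply $he\in H$ and $(he)^*=h^*e$; (H3) if $h\in H$, $k\in H\setminus E$, $h^*\ge k^+$ then $hk\in H$ and $(hk)^*=k^*$; (H4) every $m$ is $\sigma$-related to some $h\in H$; (H5) if $h,k,w\in H$, $hk\,\sigma\,w$, $k^*=w^*$, then some $u\in H$ has $u\,\sigma\,h$, $u^*\ge k^+$. $H$ is proper if ($h^*=k^*$ and $h\,\sigma\,k$) iff $h=k$. $h_1\cdots h_n$ is in $H$-canonical form if $h_i^*<h_{i+1}^+$ ($1\le i<n$) and $h_i\notin E$ ($2\le i\le n$); $M$ has $H$-canonical forms if each element has exactly one such expression. A basis is an atomic generating set $H$ for which $M$ has $H$-canonical forms; a proper basis is a basis which is proper. *)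

(* Setoid presentation of P_l(T,X): elements are words in the
   free monoid on T + X, and equality in P_l(T,X) is the congruence [sim]. *)
From Stdlib Require Import List ClassicalEpsilon.
Import ListNotations.

Record Monoid := {
  mcar :> Type;
  mop : mcar -> mcar -> mcar;
  mone : mcar;
  massoc : forall a b c, mop a (mop b c) = mop (mop a b) c;
  mone_l : forall a, mop mone a = a;
  mone_r : forall a, mop a mone = a }.

Record Semilattice := {
  scar :> Type;
  sop : scar -> scar -> scar;
  sone : scar;
  sassoc : forall a b c, sop a (sop b c) = sop (sop a b) c;
  scomm : forall a b, sop a b = sop b a;
  sidem : forall a, sop a a = a;
  sone_l : forall a, sop sone a = a }.

Arguments mop {_}.
Arguments mone {_}.
Arguments sop {_}.
Arguments sone {_}.
Definition sle {X : Semilattice} (e f : X) : Prop := sop e f = e.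
Definition slt {X : Semilattice} (e f : X) : Prop := sle e f /\ e <> f.

Record OPAction (T : Monoid) (X : Semilattice) := {
  act :> T -> X -> X;
  act_one : forall x, act (mone) x = x;
  act_comp : forall s t x, act s (act t x) = act (mop s t) x;
  act_mono : forall t x y, sle x y -> sle (act t x) (act t y) }.
Arguments act {_ _}.

Section PL.
Context {T : Monoid} {X : Semilattice} (A : OPAction T X).

Definition letter : Type := (mcar T + scar X)%type.
Definition word : Type := list letter.

Fixpoint wact (w : word) (x : X) : X :=
  match w with
  | [] => x
  | inl t :: w' => A t (wact w' x)
  | inr e :: w' => sop e (wact w' x)
  end.

Definition wplus (w : word) : X := wact w (sone).

(* the congruence: free-product relations, nil = 1_T (adjoined identity),
   1_T = 1_X, and alpha^+ alpha = alpha *)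
Inductive sim : word -> word -> Prop :=
| sim_TT t t' : sim [inl t; inl t'] [inl (mop t t')]
| sim_XX e f : sim [inr e; inr f] [inr (sop e f)]
| sim_nil : sim [] [inl (mone)]
| sim_one : sim [inl (mone)] [inr (sone)]
| sim_plus a : sim (inr (wplus a) :: a) a
| sim_refl a : sim a a
| sim_sym a b : sim a b -> sim b a
| sim_trans a b c : sim a b -> sim b c -> sim a c
| sim_cat a b c d : sim a b -> sim c d -> sim (a ++ c) (b ++ d).

Definition plus (a : word) : word := [inr (wplus a)].

(* T-normal forms t0 e1 t1 ... en tn, encoded as t0 and [(e1,t1);...;(en,tn)] *)
Definition pairs_word (ps : list (scar X * mcar T)) : word :=
  flat_map (fun p => [inr (fst p); inl (snd p)]) ps.

Definition nf_word (t0 : T) (ps : list (scar X * mcar T)) : word :=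
  inl t0 :: pairs_word ps.

Definition nf_conds (ps : list (scar X * mcar T)) : Prop :=
  forall pre e t post, ps = pre ++ (e, t) :: post ->
    e <> sone /\
    (post <> [] -> t <> mone) /\
    slt e (wplus (inl t :: pairs_word post)).

Definition is_TNF (a : word) (t0 : T) (ps : list (scar X * mcar T)) : Prop :=
  sim (nf_word t0 ps) a /\ nf_conds ps.

Definition star_val (ps : list (scar X * mcar T)) : X :=
  match ps with
  | [] => sone
  | _ => let (e, t) := last ps (sone, mone) in
         if excluded_middle_informative (t = mone) then e else sone
  end.

Definition star (a : word) : word :=
  let nf := epsilon (inhabits (mone, @nil (scar X * mcar T)))
                    (fun p => is_TNF a (fst p) (snd p)) in
  [inr (star_val (snd nf))].

Definition is_proj (a : word) : Prop := exists x : X, sim a [inr x].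
Definition leE (a b : word) : Prop := sim (a ++ b) a.
Definition ltE (a b : word) : Prop := leE a b /\ ~ sim a b.

Inductive sigma : word -> word -> Prop :=
| sg_sim a b : sim a b -> sigma a b
| sg_proj a b : is_proj a -> is_proj b -> sigma a b
| sg_sym a b : sigma a b -> sigma b a
| sg_trans a b c : sigma a b -> sigma b c -> sigma a c
| sg_cat a b c d : sigma a b -> sigma c d -> sigma (a ++ c) (b ++ d).

Definition atomic (H : word -> Prop) : Prop :=
  (forall a, is_proj a -> H a) /\
  (forall h e, H h -> is_proj e -> H (h ++ e) /\ sim (star (h ++ e)) (star h ++ e)) /\
  (forall h k, H h -> H k -> ~ is_proj k -> leE (plus k) (star h) ->
     H (h ++ k) /\ sim (star (h ++ k)) (star k)) /\
  (forall m, exists h, H h /\ sigma m h) /\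
  (forall h k w, H h -> H k -> H w -> sigma (h ++ k) w -> sim (star k) (star w) ->
     exists u, H u /\ sigma u h /\ leE (plus k) (star u)).

Definition proper (H : word -> Prop) : Prop :=
  forall h k, H h -> H k -> ((sim (star h) (star k) /\ sigma h k) <-> sim h k).

Definition generating (H : word -> Prop) : Prop :=
  forall m, exists hs, Forall H hs /\ sim m (concat hs).

Definition canonical (H : word -> Prop) (hs : list word) (m : word) : Prop :=
  hs <> [] /\ Forall H hs /\ sim m (concat hs) /\
  (forall i, S i < length hs -> ltE (star (nth i hs [])) (plus (nth (S i) hs []))) /\
  (forall i, 1 <= i < length hs -> ~ is_proj (nth i hs [])).

Definition has_canonical_forms (H : word -> Prop) : Prop :=
  forall m, (exists hs, canonical H hs m) /\
    (forall hs hs', canonical H hs m -> canonical H hs' m ->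
       length hs = length hs' /\
       forall i, i < length hs -> sim (nth i hs []) (nth i hs' [])).

Definition basis (H : word -> Prop) : Prop :=
  atomic H /\ generating H /\ has_canonical_forms H.

Definition proper_basis (H : word -> Prop) : Prop := basis H /\ proper H.

Definition HP (a : word) : Prop := exists (t : T) (e : X), sim a [inl t; inr e].

End PL.

(** Every word over [T + X] can be read from right to left into a T-normal
    form [t0 e1 t1 ... en tn]: a letter [t] multiplies [t0], and a letter [e]
    either is absorbed (when [e >= (current word)^+]) or is pushed in front as a
    new projection [e (current word)^+].  The result depends only on the
    [~]-class and is a fixed point on T-normal forms, so [~] is decided by
    normal forms, and [^+], [^*] can be read off them.

    In [H^P], [s f] is canonically followed by [s' f'] exactly when
    [f < s'.f'] and [s' <> 1]; such chains [s1 f1 ... sn fn] correspond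
    bijectively to T-normal forms via [t0 = s1], [ei = fi], [ti = s(i+1)]
    (dropping a trailing [fn = 1]).  This gives existence and uniqueness of
    canonical forms, [alpha^+ = s1.f1 = h1^+] and [alpha^* = fn = hn^*].

    The [T]-component of a word (the product of its [T]-letters) is a
    [sigma]-invariant: every word is [sigma]-related to [t 1] for its
    [T]-component [t], and [(t 1)^* = 1] dominates every projection, which
    yields (H4) and (H5); together with [^*] it separates the elements of
    [H^P], which is properness. *)

From Stdlib Require Import List ClassicalEpsilon Lia.
Import ListNotations.

#[local] Arguments sassoc {_}.
#[local] Arguments scomm {_}.
#[local] Arguments sidem {_}.
#[local] Arguments sone_l {_}.
#[local] Arguments massoc {_}.
#[local] Arguments mone_l {_}.
#[local] Arguments mone_r {_}.

Local Notation dec := excluded_middle_informative.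

Section Semilattice.
Context {X : Semilattice}.

Lemma sop_one_r (a : X) : sop a sone = a.
Proof. rewrite scomm; apply sone_l. Qed.

Lemma sop_left_comm (a b c : X) : sop a (sop b c) = sop b (sop a c).
Proof. rewrite !sassoc, (scomm a b); reflexivity. Qed.

Lemma sle_sone (x : X) : sle x sone.
Proof. apply sop_one_r. Qed.

Lemma slt_neq_sone (f q : X) : slt f q -> f <> sone.
Proof. intros [Hle Hne] E; subst; unfold sle in Hle; rewrite sone_l in Hle; auto. Qed.

End Semilattice.

Section Ehresmann.
Context {T : Monoid} {X : Semilattice} (A : OPAction T X).

Lemma wact_mono (w : word) (x y : X) : sle x y -> sle (wact A w x) (wact A w y).
Proof.
  induction w as [|[t|e] w IH]; simpl; intro H; auto.
  - apply act_mono; auto.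
  - specialize (IH H). unfold sle in *.
    rewrite <- sassoc, (sop_left_comm (wact A w x) e), sassoc, sidem, IH. reflexivity.
Qed.

Lemma sim_cons (l : letter) (a b : word) : sim A a b -> sim A (l :: a) (l :: b).
Proof. intro H. change (sim A ([l] ++ a) ([l] ++ b)). apply sim_cat; auto using sim_refl. Qed.

Lemma sim_cons_mone (w : word) : sim A (inl mone :: w) w.
Proof.
  change (sim A ([inl mone] ++ w) ([] ++ w)).
  apply sim_cat; [apply sim_sym, sim_nil|apply sim_refl].
Qed.

Lemma sim_app_mone (w : word) : sim A (w ++ [inl mone]) w.
Proof.
  rewrite <- (app_nil_r w) at 2. apply sim_cat; [apply sim_refl|apply sim_sym, sim_nil].
Qed.

Lemma sim_cons_inr_wplus e (w : word) :
  sim A (inr e :: w) (inr (sop e (wplus A w)) :: w).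
Proof.
  eapply sim_trans; [apply sim_cons, sim_sym, sim_plus|].
  change (sim A ([inr e; inr (wplus A w)] ++ w) ([inr (sop e (wplus A w))] ++ w)).
  apply sim_cat; [apply sim_XX|apply sim_refl].
Qed.

(** ** The normalization machine *)

Definition tnf : Type := (mcar T * list (scar X * mcar T))%type.
Definition tnf_word (N : tnf) : word := nf_word (fst N) (snd N).
Definition tnf_plus (N : tnf) : X := wplus A (tnf_word N).

Lemma tnf_plus_pair t0 ps : tnf_plus (t0, ps) = A t0 (wact A (pairs_word ps) sone).
Proof. reflexivity. Qed.

Lemma wact_pairs_cons e t ps :
  wact A (pairs_word ((e, t) :: ps)) sone = sop e (A t (wact A (pairs_word ps) sone)).
Proof. reflexivity. Qed.

(* Prepends the projection [f] (meant to satisfy [f <= N^+]); a leading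
   [t0 = 1] is absorbed into [f]. *)
Definition push_proj (f : X) (N : tnf) : tnf :=
  match N with
  | (t0, []) => (mone, [(f, t0)])
  | (t0, (e1, t1) :: ps) =>
      if dec (t0 = mone) then (mone, (f, t1) :: ps) else (mone, (f, t0) :: (e1, t1) :: ps)
  end.

Definition step (l : letter) (N : tnf) : tnf :=
  match l with
  | inl s => (mop s (fst N), snd N)
  | inr e => if dec (sop e (tnf_plus N) = tnf_plus N) then N
             else push_proj (sop e (tnf_plus N)) N
  end.

Definition run (w : word) (N : tnf) : tnf := fold_right step N w.
Definition normalize (w : word) : tnf := run w (mone, []).

Lemma tnf_plus_push f N : sop f (tnf_plus N) = f -> tnf_plus (push_proj f N) = f.
Proof.
  destruct N as [t0 [|[e1 t1] ps]]; intro H; simpl push_proj.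
  - rewrite tnf_plus_pair, act_one, wact_pairs_cons. exact H.
  - destruct (dec (t0 = mone)) as [->|_];
      rewrite tnf_plus_pair, act_one, wact_pairs_cons; [|exact H].
    rewrite tnf_plus_pair, act_one, wact_pairs_cons in H.
    rewrite <- H at 1. rewrite <- !sassoc, sidem. exact H.
Qed.

Lemma tnf_plus_step l N : tnf_plus (step l N) = wact A [l] (tnf_plus N).
Proof.
  destruct N as [t0 ps], l as [s|e]; cbn [step].
  - rewrite !tnf_plus_pair; simpl. symmetry; apply act_comp.
  - destruct (dec _) as [H|H]; [symmetry; exact H|].
    change (tnf_plus (push_proj (sop e (tnf_plus (t0, ps))) (t0, ps)) = sop e (tnf_plus (t0, ps))).
    apply tnf_plus_push. rewrite <- sassoc, sidem. reflexivity.
Qed.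

Lemma tnf_plus_run w N : tnf_plus (run w N) = wact A w (tnf_plus N).
Proof.
  induction w as [|l w IH]; simpl; auto.
  change (tnf_plus (step l (run w N)) = wact A (l :: w) (tnf_plus N)).
  rewrite tnf_plus_step, IH. destruct l; simpl; rewrite ?sop_one_r; reflexivity.
Qed.

Lemma wplus_normalize a : wplus A a = tnf_plus (normalize a).
Proof. unfold normalize. rewrite tnf_plus_run, tnf_plus_pair, act_one. reflexivity. Qed.

Lemma push_proj_twice g f N : push_proj g (push_proj f N) = push_proj g N.
Proof.
  destruct N as [t0 [|[e1 t1] ps]]; simpl.
  - destruct (dec (@mone T = mone)); [reflexivity|congruence].
  - destruct (dec (t0 = mone)); simpl; destruct (dec (@mone T = mone)); congruence.
Qed.

Lemma step_inr_sop e f N : step (inr e) (step (inr f) N) = step (inr (sop e f)) N.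
Proof.
  set (p := tnf_plus N). unfold step at 2. fold p.
  destruct (dec (sop f p = p)) as [Hf|Hf].
  - unfold step. fold p. rewrite <- sassoc, Hf. reflexivity.
  - assert (Hp : tnf_plus (push_proj (sop f p) N) = sop f p)
      by (apply tnf_plus_push; fold p; rewrite <- sassoc, sidem; reflexivity).
    unfold step. rewrite Hp. fold p. rewrite <- sassoc.
    destruct (dec (sop e (sop f p) = sop f p)) as [He|He].
    + rewrite He. destruct (dec (sop f p = p)); [contradiction|reflexivity].
    + rewrite push_proj_twice.
      destruct (dec (sop e (sop f p) = p)) as [Hq|]; [|reflexivity].
      (* [efp = p] forces [fp = p] *)
      exfalso; apply Hf.
      rewrite <- Hq at 1. rewrite (sop_left_comm f e), (sassoc f f p), sidem. exact Hq.
Qed.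

Lemma step_wplus_run a N : step (inr (wplus A a)) (run a N) = run a N.
Proof.
  unfold step. rewrite tnf_plus_run.
  destruct (dec _) as [|Hn]; [reflexivity|exfalso; apply Hn].
  unfold wplus. rewrite scomm. apply wact_mono, sle_sone.
Qed.

Lemma run_sim a b : sim A a b -> forall N, run a N = run b N.
Proof.
  induction 1; intro N.
  - destruct N; simpl. rewrite massoc. reflexivity.
  - apply step_inr_sop.
  - destruct N; simpl. rewrite mone_l. reflexivity.
  - destruct N as [t0 ps]; simpl. rewrite mone_l.
    unfold step. rewrite sone_l. destruct (dec _); [reflexivity|congruence].
  - apply step_wplus_run.
  - reflexivity.
  - symmetry; auto.
  - rewrite IHsim1; auto.
  - unfold run in *. rewrite !fold_right_app, <- IHsim1. f_equal. apply IHsim2.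
Qed.

Lemma tnf_word_push f N :
  sop f (tnf_plus N) = f -> sim A (tnf_word (push_proj f N)) (inr f :: tnf_word N).
Proof.
  destruct N as [t0 [|[e1 t1] ps]]; intro H; simpl push_proj; [apply sim_cons_mone|].
  destruct (dec (t0 = mone)) as [->|_]; [|apply sim_cons_mone].
  change (sim A (inl mone :: inr f :: inl t1 :: pairs_word ps)
                (inr f :: inl mone :: inr e1 :: inl t1 :: pairs_word ps)).
  eapply sim_trans; [apply sim_cons_mone|].
  apply sim_sym. eapply sim_trans; [apply sim_cons, sim_cons_mone|].
  (* [f e1 = f] since [f <= e1 (t1 ...)^+] *)
  assert (Hfe : sop f e1 = f).
  { rewrite tnf_plus_pair, act_one, wact_pairs_cons in H.
    rewrite <- H, <- sassoc. f_equal. rewrite (scomm _ e1), sassoc, sidem. reflexivity. }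
  change (sim A ([inr f; inr e1] ++ (inl t1 :: pairs_word ps))
                ([inr f] ++ (inl t1 :: pairs_word ps))).
  apply sim_cat; [rewrite <- Hfe at 2; apply sim_XX|apply sim_refl].
Qed.

Lemma tnf_word_step l N : sim A (tnf_word (step l N)) (l :: tnf_word N).
Proof.
  destruct l as [s|e].
  - destruct N as [t0 ps].
    change (sim A ([inl (mop s t0)] ++ pairs_word ps) ([inl s; inl t0] ++ pairs_word ps)).
    apply sim_cat; [apply sim_sym, sim_TT|apply sim_refl].
  - eapply sim_trans; [|apply sim_sym, sim_cons_inr_wplus]. fold (tnf_plus N).
    unfold step. destruct (dec _) as [H|H].
    + rewrite H. apply sim_sym, sim_plus.
    + apply tnf_word_push. rewrite <- sassoc, sidem. reflexivity.
Qed.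

Lemma tnf_word_run w N : sim A (tnf_word (run w N)) (w ++ tnf_word N).
Proof.
  induction w as [|l w IH]; simpl; [apply sim_refl|].
  eapply sim_trans; [apply tnf_word_step|apply sim_cons, IH].
Qed.

Lemma tnf_word_normalize w : sim A (tnf_word (normalize w)) w.
Proof. eapply sim_trans; [apply tnf_word_run|apply sim_app_mone]. Qed.

Lemma sim_iff_normalize a b : sim A a b <-> normalize a = normalize b.
Proof.
  split; intro H; [apply run_sim, H|].
  eapply sim_trans; [apply sim_sym, tnf_word_normalize|]. rewrite H. apply tnf_word_normalize.
Qed.

Definition nf_head_cond (e : X) (t : T) (ps : list (scar X * mcar T)) : Prop :=
  e <> sone /\ (ps <> [] -> t <> mone) /\ slt e (wplus A (inl t :: pairs_word ps)).

Lemma nf_conds_nil : nf_conds A [].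
Proof. intros pre e t post H. destruct pre; discriminate. Qed.

Lemma nf_conds_cons e t ps : nf_conds A ((e, t) :: ps) <-> nf_head_cond e t ps /\ nf_conds A ps.
Proof.
  split.
  - intro H. split; [apply (H [] e t ps); reflexivity|].
    intros pre e' t' post Hp. apply (H ((e, t) :: pre)). rewrite Hp. reflexivity.
  - intros [H1 H2] [|p pre] e' t' post Hp; injection Hp; intros; subst; [exact H1|].
    apply (H2 pre); reflexivity.
Qed.

Lemma nf_conds_push f N : nf_conds A (snd N) -> sop f (tnf_plus N) = f -> f <> tnf_plus N ->
  nf_conds A (snd (push_proj f N)).
Proof.
  intros HN H Hne.
  assert (Hf1 : f <> sone) by (intro E; subst f; apply Hne; rewrite sone_l in H; auto).
  destruct N as [t0 [|[e1 t1] ps]]; simpl push_proj; simpl snd in *.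
  - apply nf_conds_cons. split; [|apply nf_conds_nil].
    repeat split; auto; congruence.
  - destruct (dec (t0 = mone)) as [->|Hn].
    + apply nf_conds_cons in HN. destruct HN as [[He1 [Ht1 [Hs1 Hn1]]] Hr].
      apply nf_conds_cons. split; [|exact Hr].
      split; [auto|split; [auto|]].
      rewrite tnf_plus_pair, act_one, wact_pairs_cons in H, Hne.
      unfold slt, sle in *. unfold wplus in *. simpl wact in *.
      set (q := A t1 _) in *.
      split.
      * rewrite <- H at 2. rewrite <- H at 1. rewrite <- !sassoc, sidem. reflexivity.
      * intro E. rewrite Hs1, E in H. apply Hn1. rewrite <- Hs1 at 1. rewrite scomm. exact H.
    + apply nf_conds_cons. split; [|exact HN]. repeat split; auto.
Qed.

Lemma nf_conds_step l N : nf_conds A (snd N) -> nf_conds A (snd (step l N)).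
Proof.
  intro H. destruct l as [s|e]; simpl; auto.
  destruct (dec _) as [|Hn]; auto.
  apply nf_conds_push; auto. rewrite <- sassoc, sidem; reflexivity.
Qed.

Lemma nf_conds_normalize w : nf_conds A (snd (normalize w)).
Proof. induction w as [|l w IH]; [apply nf_conds_nil|apply nf_conds_step, IH]. Qed.

Lemma normalize_pairs_word ps : nf_conds A ps -> normalize (pairs_word ps) = (mone, ps).
Proof.
  induction ps as [|[e t] ps IH]; intro H; [reflexivity|].
  apply nf_conds_cons in H. destruct H as [[He [Ht [Hs Hne]]] Hr].
  change (step (inr e) (step (inl t) (normalize (pairs_word ps))) = (mone, (e, t) :: ps)).
  rewrite IH by exact Hr. simpl step at 2. rewrite mone_r.
  unfold step. change (tnf_plus (t, ps)) with (wplus A (inl t :: pairs_word ps)).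
  rewrite Hs. destruct (dec (e = _)) as [E|_]; [contradiction|].
  destruct ps as [|[e1 t1] ps]; simpl; [reflexivity|].
  destruct (dec (t = mone)) as [E|_]; [exfalso; apply Ht; [discriminate|exact E]|reflexivity].
Qed.

Lemma normalize_nf_word t0 ps : nf_conds A ps -> normalize (nf_word t0 ps) = (t0, ps).
Proof.
  intro H. change (step (inl t0) (normalize (pairs_word ps)) = (t0, ps)).
  rewrite normalize_pairs_word by exact H. simpl. rewrite mone_r. reflexivity.
Qed.

Lemma star_normalize a : star A a = [inr (star_val (snd (normalize a)))].
Proof.
  unfold star.
  match goal with |- context [epsilon ?i ?P] =>
    pose proof (epsilon_spec i P) as HE; set (q := epsilon i P) in * end.
  destruct HE as [Hs Hc].
  - exists (normalize a). split; [apply tnf_word_normalize|apply nf_conds_normalize].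
  - assert (Eq : normalize a = (fst q, snd q)).
    { rewrite <- (normalize_nf_word (fst q) (snd q) Hc). apply sim_iff_normalize, sim_sym, Hs. }
    rewrite Eq. reflexivity.
Qed.

Lemma star_sim a b : sim A a b -> star A a = star A b.
Proof. intro H. rewrite !star_normalize. apply sim_iff_normalize in H. rewrite H. reflexivity. Qed.

Lemma wplus_sim a b : sim A a b -> wplus A a = wplus A b.
Proof. intro H. rewrite !wplus_normalize. apply sim_iff_normalize in H. rewrite H. reflexivity. Qed.

Lemma plus_sim a b : sim A a b -> plus A a = plus A b.
Proof. intro H. unfold plus. rewrite (wplus_sim a b H). reflexivity. Qed.

Lemma is_proj_sim a b : sim A a b -> is_proj A a -> is_proj A b.
Proof. intros H [x Hx]. exists x. eapply sim_trans; [apply sim_sym, H|exact Hx]. Qed.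

Lemma is_proj_inr (e : X) : is_proj A [inr e].
Proof. exists e. apply sim_refl. Qed.

Lemma is_proj_nil : is_proj A [].
Proof. exists sone. eapply sim_trans; [apply sim_nil|apply sim_one]. Qed.

Lemma normalize_inr (x : X) :
  normalize [inr x] = if dec (x = sone) then (mone, []) else (mone, [(x, mone)]).
Proof.
  change (step (inr x) (mone, []) = if dec (x = sone) then (mone, []) else (mone, [(x, mone)])).
  unfold step. replace (tnf_plus (mone, [])) with (@sone X) by (symmetry; apply act_one).
  rewrite sop_one_r.
  destruct (dec (x = sone)); reflexivity.
Qed.

Lemma sim_inr_inj (x y : X) : sim A [inr x] [inr y] -> x = y.
Proof.
  intro H. apply sim_iff_normalize in H. rewrite !normalize_inr in H.
  destruct (dec (x = sone)), (dec (y = sone)); congruence.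
Qed.

Lemma ltE_inr (f q : X) : ltE A [inr f] [inr q] <-> slt f q.
Proof.
  unfold ltE, leE, slt, sle. split.
  - intros [H1 H2]. split.
    + apply sim_inr_inj. eapply sim_trans; [apply sim_sym, sim_XX|exact H1].
    + intro E. apply H2. subst. apply sim_refl.
  - intros [H1 H2]. split.
    + eapply sim_trans; [apply sim_XX|]. rewrite H1. apply sim_refl.
    + intro E. apply H2. apply sim_inr_inj; auto.
Qed.

Definition te (p : mcar T * scar X) : word := [inl (fst p); inr (snd p)].

Lemma HP_te p : HP A (te p).
Proof. destruct p as [t e]. exists t, e. apply sim_refl. Qed.

Lemma sim_inl_te (t : T) : sim A [inl t] (te (t, sone)).
Proof.
  apply sim_sym. change (sim A ([inl t] ++ [inr sone]) ([inl t] ++ [])).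
  apply sim_cat; [apply sim_refl|].
  eapply sim_trans; [apply sim_sym, sim_one|apply sim_sym, sim_nil].
Qed.

Lemma normalize_te s f :
  normalize (te (s, f)) = if dec (f = sone) then (s, []) else (s, [(f, mone)]).
Proof.
  change (step (inl s) (normalize [inr f]) = if dec (f = sone) then (s, []) else (s, [(f, mone)])).
  rewrite normalize_inr. destruct (dec (f = sone)); simpl; rewrite mone_r; reflexivity.
Qed.

Lemma star_te s f : star A (te (s, f)) = [inr f].
Proof.
  rewrite star_normalize, normalize_te. destruct (dec (f = sone)) as [->|Hn]; [reflexivity|].
  simpl. destruct (dec (@mone T = mone)); [reflexivity|congruence].
Qed.

Lemma plus_te s f : plus A (te (s, f)) = [inr (A s f)].
Proof. unfold plus, wplus, te. simpl. rewrite sop_one_r. reflexivity. Qed.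

Lemma is_proj_te s f : is_proj A (te (s, f)) <-> s = mone.
Proof.
  split.
  - intros [x Hx]. apply sim_iff_normalize in Hx. rewrite normalize_te, normalize_inr in Hx.
    destruct (dec (f = sone)), (dec (x = sone)); congruence.
  - intros ->. exists f. apply sim_cons_mone.
Qed.

(** ** The [T]-component, a [sigma]-invariant *)

Fixpoint tpart (w : word (T:=T) (X:=X)) : T :=
  match w with
  | [] => mone
  | inl t :: w' => mop t (tpart w')
  | inr _ :: w' => tpart w'
  end.

Lemma tpart_app a c : tpart (a ++ c) = mop (tpart a) (tpart c).
Proof.
  induction a as [|[t|e] a IH]; simpl.
  - rewrite mone_l; reflexivity.
  - rewrite IH, massoc; reflexivity.
  - exact IH.
Qed.

Lemma tpart_sim a b : sim A a b -> tpart a = tpart b.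
Proof.
  induction 1; simpl; rewrite ?mone_l, ?mone_r, ?massoc, ?tpart_app; congruence.
Qed.

Lemma tpart_sigma a b : sigma A a b -> tpart a = tpart b.
Proof.
  induction 1; rewrite ?tpart_app; try congruence.
  - apply tpart_sim; auto.
  - destruct H as [x Hx], H0 as [y Hy]. rewrite (tpart_sim _ _ Hx), (tpart_sim _ _ Hy). reflexivity.
Qed.

Lemma sigma_tpart m : sigma A m (te (tpart m, sone)).
Proof.
  apply (sg_trans _ _ [inl (tpart m)]); [|apply sg_sim, sim_inl_te].
  induction m as [|[t|e] m IH].
  - apply sg_sim, sim_nil.
  - apply (sg_trans _ _ ([inl t] ++ [inl (tpart m)])); [|apply sg_sim, sim_TT].
    change (sigma A ([inl t] ++ m) ([inl t] ++ [inl (tpart m)])).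
    apply sg_cat; [apply sg_sim, sim_refl|exact IH].
  - apply (sg_trans _ _ ([] ++ m)); [|exact IH].
    change (sigma A ([inr e] ++ m) ([] ++ m)).
    apply sg_cat; [apply sg_proj; [apply is_proj_inr|apply is_proj_nil]|apply sg_sim, sim_refl].
Qed.

(** ** Chains [s1 f1, ..., sn fn] and T-normal forms *)

Fixpoint is_chain (L : list (mcar T * scar X)) : Prop :=
  match L with
  | [] => False
  | (s, f) :: L' =>
      match L' with
      | [] => True
      | (s', f') :: _ => slt f (A s' f') /\ s' <> mone /\ is_chain L'
      end
  end.

Fixpoint tnf_of_chain (L : list (mcar T * scar X)) : tnf :=
  match L with
  | [] => (mone, [])
  | (s, f) :: L' =>
      match L' with
      | [] => if dec (f = sone) then (s, []) else (s, [(f, mone)])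
      | _ => (s, (f, fst (tnf_of_chain L')) :: snd (tnf_of_chain L'))
      end
  end.

Fixpoint chain_of_tnf (t0 : T) (ps : list (scar X * mcar T)) : list (mcar T * scar X) :=
  match ps with
  | [] => [(t0, sone)]
  | (e, t) :: ps' =>
      (t0, e) :: match ps' with
                 | [] => if dec (t = mone) then [] else [(t, sone)]
                 | _ => chain_of_tnf t ps'
                 end
  end.

Lemma tnf_of_chain_cons s f L : L <> [] ->
  tnf_of_chain ((s, f) :: L) = (s, (f, fst (tnf_of_chain L)) :: snd (tnf_of_chain L)).
Proof. destruct L; [congruence|reflexivity]. Qed.

Lemma fst_tnf_of_chain s f L : fst (tnf_of_chain ((s, f) :: L)) = s.
Proof. destruct L; simpl; [destruct (dec _)|]; reflexivity. Qed.

Lemma tnf_of_chain_eta s f L : tnf_of_chain ((s, f) :: L) = (s, snd (tnf_of_chain ((s, f) :: L))).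
Proof. rewrite <- (fst_tnf_of_chain s f L) at 2. destruct (tnf_of_chain _); reflexivity. Qed.

Lemma snd_tnf_of_chain_nil s f L :
  snd (tnf_of_chain ((s, f) :: L)) = [] -> L = [] /\ f = sone.
Proof.
  destruct L as [|p L]; simpl; [|discriminate].
  destruct (dec (f = sone)); simpl; [auto|discriminate].
Qed.

Lemma tnf_plus_chain s f L :
  is_chain ((s, f) :: L) -> tnf_plus (tnf_of_chain ((s, f) :: L)) = A s f.
Proof.
  revert s f. induction L as [|[s' f'] L IH]; intros s f HL.
  - simpl. destruct (dec (f = sone)) as [->|_]; [reflexivity|].
    rewrite tnf_plus_pair, wact_pairs_cons, act_one. simpl. rewrite sop_one_r. reflexivity.
  - destruct HL as [[Hs _] [_ HL]].
    rewrite tnf_of_chain_cons, fst_tnf_of_chain by discriminate.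
    specialize (IH s' f' HL). rewrite tnf_of_chain_eta in IH.
    rewrite tnf_plus_pair, wact_pairs_cons. rewrite tnf_plus_pair in IH.
    unfold sle in Hs. rewrite IH, Hs. reflexivity.
Qed.

Lemma nf_conds_chain L : is_chain L -> nf_conds A (snd (tnf_of_chain L)).
Proof.
  induction L as [|[s f] L IH]; [contradiction|].
  destruct L as [|[s' f'] L].
  - intros _. simpl. destruct (dec (f = sone)) as [|Hn]; simpl; [apply nf_conds_nil|].
    apply nf_conds_cons. split; [|apply nf_conds_nil]. split; [auto|split; [congruence|]].
    unfold wplus; simpl. rewrite act_one. split; [apply sle_sone|auto].
  - intros [Hs [Hs' HL]].
    rewrite tnf_of_chain_cons, fst_tnf_of_chain by discriminate.
    apply nf_conds_cons. split; [|apply IH, HL].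
    split; [eapply slt_neq_sone; eauto|split; [auto|]].
    change (slt f (tnf_plus (s', snd (tnf_of_chain ((s', f') :: L))))).  
    rewrite <- tnf_of_chain_eta, tnf_plus_chain by exact HL. exact Hs.
Qed.

Lemma tnf_word_chain L : is_chain L -> sim A (tnf_word (tnf_of_chain L)) (concat (map te L)).
Proof.
  induction L as [|[s f] L IH]; [contradiction|].
  destruct L as [|[s' f'] L].
  - intros _. simpl. destruct (dec (f = sone)) as [->|_].
    + apply sim_inl_te.
    + apply (sim_app_mone [inl s; inr f]).
  - intros [_ [_ HL]].
    rewrite tnf_of_chain_cons, fst_tnf_of_chain by discriminate.
    change (sim A ([inl s; inr f] ++ tnf_word (s', snd (tnf_of_chain ((s', f') :: L))))
                  (te (s, f) ++ concat (map te ((s', f') :: L)))).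
    apply sim_cat; [apply sim_refl|]. rewrite <- tnf_of_chain_eta. exact (IH HL).
Qed.

Lemma normalize_chain L : is_chain L -> normalize (concat (map te L)) = tnf_of_chain L.
Proof.
  intro HL. pose proof (tnf_word_chain L HL) as E. apply sim_iff_normalize in E.
  unfold tnf_word in E. rewrite normalize_nf_word in E by (apply nf_conds_chain; auto).
  rewrite <- E. destruct (tnf_of_chain L); reflexivity.
Qed.

Lemma chain_of_tnf_spec ps : forall t0, nf_conds A ps ->
  is_chain (chain_of_tnf t0 ps) /\ tnf_of_chain (chain_of_tnf t0 ps) = (t0, ps).
Proof.
  induction ps as [|[e t] ps IH]; intros t0 H.
  - simpl. split; auto. destruct (dec (@sone X = sone)); [reflexivity|congruence].
  - apply nf_conds_cons in H. destruct H as [[He [Ht Hs]] Hr].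
    destruct ps as [|[e' t'] ps].
    + simpl. destruct (dec (t = mone)) as [->|Hn].
      * simpl. split; auto. destruct (dec (e = sone)); [contradiction|reflexivity].
      * split; [repeat split; auto; apply Hs|].
        simpl. destruct (dec (@sone X = sone)); [reflexivity|congruence].
    + destruct (IH t Hr) as [HL Ht2].
      change (chain_of_tnf t0 ((e, t) :: (e', t') :: ps))
        with ((t0, e) :: chain_of_tnf t ((e', t') :: ps)).
      assert (Hc : chain_of_tnf t ((e', t') :: ps)
                   = (t, e') :: tl (chain_of_tnf t ((e', t') :: ps)))
        by reflexivity.
      split.
      * rewrite Hc. split; [|split; [apply Ht; discriminate|rewrite <- Hc; exact HL]].
        apply nf_conds_cons in Hr. destruct Hr as [[_ [_ [Hs' _]]] _].
        unfold slt, sle in *. unfold wplus in Hs, Hs'. simpl in Hs, Hs'.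
        rewrite Hs' in Hs. exact Hs.
      * rewrite Hc, tnf_of_chain_cons by discriminate. rewrite <- Hc, Ht2. reflexivity.
Qed.

Lemma chain_of_tnf_of_chain L :
  is_chain L -> chain_of_tnf (fst (tnf_of_chain L)) (snd (tnf_of_chain L)) = L.
Proof.
  induction L as [|[s f] L IH]; [contradiction|].
  destruct L as [|[s' f'] L].
  - intros _. simpl. destruct (dec (f = sone)) as [->|Hn]; simpl; [reflexivity|].
    destruct (dec (@mone T = mone)); [reflexivity|congruence].
  - intros [_ [Hs' HL]]. specialize (IH HL).
    rewrite tnf_of_chain_cons by discriminate. cbn [fst snd].
    rewrite fst_tnf_of_chain in IH |- *.
    destruct (snd (tnf_of_chain ((s', f') :: L))) as [|p ps] eqn:E.
    + apply snd_tnf_of_chain_nil in E. destruct E as [-> ->]. simpl.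
      destruct (dec (s' = mone)); [contradiction|reflexivity].
    + simpl. f_equal. exact IH.
Qed.

Lemma star_val_chain L : is_chain L -> star_val (snd (tnf_of_chain L)) = snd (last L (mone, sone)).
Proof.
  induction L as [|[s f] L IH]; [contradiction|].
  destruct L as [|[s' f'] L].
  - intros _. simpl. destruct (dec (f = sone)) as [->|Hn]; [reflexivity|].
    simpl. destruct (dec (@mone T = mone)); [reflexivity|congruence].
  - intros [_ [Hs' HL]]. specialize (IH HL).
    rewrite tnf_of_chain_cons, fst_tnf_of_chain by discriminate. cbn [snd].
    destruct (snd (tnf_of_chain ((s', f') :: L))) as [|p ps] eqn:E.
    + apply snd_tnf_of_chain_nil in E. destruct E as [-> ->]. simpl.
      destruct (dec (s' = mone)); [contradiction|reflexivity].
    + exact IH.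
Qed.

Definition canonical_links (hs : list (word (T:=T) (X:=X))) : Prop :=
  (forall i, S i < length hs -> ltE A (star A (nth i hs [])) (plus A (nth (S i) hs []))) /\
  (forall i, 1 <= i < length hs -> ~ is_proj A (nth i hs [])).

Lemma canonical_links_cons h h' hs : canonical_links (h :: h' :: hs) <->
  ltE A (star A h) (plus A h') /\ ~ is_proj A h' /\ canonical_links (h' :: hs).
Proof.
  unfold canonical_links. split.
  - intros [H1 H2]. split; [apply (H1 0); simpl; lia|].
    split; [apply (H2 1); simpl; lia|].
    split; intros i Hi; [apply (H1 (S i))|apply (H2 (S i))]; simpl in *; lia.
  - intros [H1 [H2 [H3 H4]]]. split.
    + intros [|i] Hi; [exact H1|]. apply H3. simpl in *; lia.
    + intros [|[|i]] Hi; [lia|exact H2|]. apply (H4 (S i)). simpl in *; lia.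
Qed.

Definition represents (hs : list word) (L : list (mcar T * scar X)) : Prop :=
  Forall2 (fun h p => sim A h (te p)) hs L.

Lemma canonical_links_chain hs L : represents hs L -> L <> [] ->
  (canonical_links hs <-> is_chain L).
Proof.
  induction 1 as [|h [s f] hs L Hh HF IH]; [congruence|intros _].
  destruct HF as [|h' [s' f'] hs' L' Hh' HF'].
  - split; intros _; [exact I|]. split; intros i Hi; simpl in Hi; lia.
  - rewrite canonical_links_cons, IH by discriminate.
    rewrite (star_sim _ _ Hh), (plus_sim _ _ Hh'), star_te, plus_te, ltE_inr.
    change (is_chain ((s, f) :: (s', f') :: L'))
      with (slt f (A s' f') /\ s' <> mone /\ is_chain ((s', f') :: L')).
    assert (Hp : is_proj A h' <-> s' = mone).
    { rewrite <- (is_proj_te s' f'). split; apply is_proj_sim; auto using sim_sym. }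
    rewrite Hp. tauto.
Qed.

Lemma HP_represents hs : Forall (HP A) hs -> exists L, represents hs L.
Proof.
  induction 1 as [|h hs [t [e He]] _ [L HL]].
  - exists []. constructor.
  - exists ((t, e) :: L). constructor; auto.
Qed.

Lemma represents_concat hs L : represents hs L -> sim A (concat hs) (concat (map te L)).
Proof.
  induction 1; [apply sim_refl|]. apply sim_cat; auto.
Qed.

Lemma represents_nth hs L : represents hs L -> forall i, i < length hs ->
  sim A (nth i hs []) (te (nth i L (mone, sone))).
Proof.
  induction 1; intros i Hi; simpl in Hi; [lia|].
  destruct i; simpl; auto. apply IHForall2. lia.
Qed.

Lemma represents_last hs L : represents hs L -> L <> [] ->
  sim A (last hs []) (te (last L (mone, sone))).
Proof.
  induction 1 as [|h p hs L Hh HF IH]; [congruence|intros _].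
  destruct HF; [exact Hh|]. apply IH. discriminate.
Qed.

Lemma represents_map_te L : represents (map te L) L.
Proof. induction L; constructor; auto. apply sim_refl. Qed.

Lemma canonical_HP_chain hs m : canonical A (HP A) hs m ->
  exists L, represents hs L /\ is_chain L /\ normalize m = tnf_of_chain L.
Proof.
  intros [Hne [HF [Hm Hlinks]]].
  destruct (HP_represents hs HF) as [L HL].
  assert (LN : L <> []) by (intro; subst; inversion HL; congruence).
  assert (HLc : is_chain L) by (apply (canonical_links_chain hs L HL LN), Hlinks).
  exists L. split; [exact HL|split; [exact HLc|]].
  rewrite <- normalize_chain by exact HLc. apply sim_iff_normalize.
  eapply sim_trans; [exact Hm|apply represents_concat, HL].
Qed.

Lemma HP_of_proj a : is_proj A a -> HP A a.
Proof.
  intros [x Hx]. exists mone, x. eapply sim_trans; [exact Hx|apply sim_sym, sim_cons_mone].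
Qed.

Lemma HP_app_proj h e : HP A h -> is_proj A e ->
  HP A (h ++ e) /\ sim A (star A (h ++ e)) (star A h ++ e).
Proof.
  intros [t [x Hh]] [y Hy].
  change [inl t; inr x] with (te (t, x)) in Hh.
  assert (E : sim A (h ++ e) (te (t, sop x y))).
  { apply (sim_trans _ _ ([inl t; inr x] ++ [inr y])); [apply sim_cat; auto|].
    change (sim A ([inl t] ++ [inr x; inr y]) ([inl t] ++ [inr (sop x y)])).
    apply sim_cat; [apply sim_refl|apply sim_XX]. }
  split; [exists t, (sop x y); exact E|].
  rewrite (star_sim _ _ E), (star_sim _ _ Hh), !star_te.
  apply sim_sym. eapply sim_trans; [|apply sim_XX].
  apply (sim_cat A [inr x] [inr x] e [inr y]); [apply sim_refl|exact Hy].
Qed.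

(* [x >= (s y)^+] lets [x] be absorbed into [s y], so [t x . s y ~ ts y]. *)
Lemma HP_app h k : HP A h -> HP A k -> leE A (plus A k) (star A h) ->
  HP A (h ++ k) /\ sim A (star A (h ++ k)) (star A k).
Proof.
  intros [t [x Hh]] [s [y Hk]] Hle.
  change [inl t; inr x] with (te (t, x)) in Hh.
  change [inl s; inr y] with (te (s, y)) in Hk.
  rewrite (plus_sim _ _ Hk), (star_sim _ _ Hh), plus_te, star_te in Hle.
  assert (Hxy : sop (A s y) x = A s y).
  { apply sim_inr_inj. eapply sim_trans; [apply sim_sym, sim_XX|exact Hle]. }
  assert (Wk : wplus A k = A s y).
  { rewrite (wplus_sim _ _ Hk). unfold wplus, te; simpl. rewrite sop_one_r. reflexivity. }
  assert (Habs : sim A (inr x :: k) k).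
  { eapply sim_trans; [apply sim_cons_inr_wplus|]. rewrite Wk, scomm, Hxy, <- Wk. apply sim_plus. }
  assert (E : sim A (h ++ k) (te (mop t s, y))).
  { apply (sim_trans _ _ (te (t, x) ++ k)); [apply sim_cat; [exact Hh|apply sim_refl]|].
    apply (sim_trans _ _ ([inl t] ++ te (s, y))).
    - apply (sim_cat A [inl t] [inl t] (inr x :: k)); [apply sim_refl|].
      eapply sim_trans; [exact Habs|exact Hk].
    - change (sim A ([inl t; inl s] ++ [inr y]) ([inl (mop t s)] ++ [inr y])).
      apply sim_cat; [apply sim_TT|apply sim_refl]. }
  split; [exists (mop t s), y; exact E|].
  rewrite (star_sim _ _ E), (star_sim _ _ Hk), !star_te. apply sim_refl.
Qed.

Lemma leE_plus_sone a : leE A (plus A a) [inr sone].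
Proof. unfold leE, plus. eapply sim_trans; [apply sim_XX|]. rewrite sop_one_r. apply sim_refl. Qed.

Lemma HP_atomic : atomic A (HP A).
Proof.
  split; [exact HP_of_proj|split; [exact HP_app_proj|split; [|split]]].
  - intros h k Hh Hk _. apply HP_app; assumption.
  - intro m. exists (te (tpart m, sone)). split; [apply HP_te|apply sigma_tpart].
  - intros h k w _ _ _ _ _. exists (te (tpart h, sone)).
    split; [apply HP_te|split; [apply sg_sym, sigma_tpart|]].
    rewrite star_te. apply leE_plus_sone.
Qed.

Definition letter_te (l : letter) : word :=
  match l with inl t => te (t, sone) | inr e => te (mone, e) end.

Lemma HP_generating : generating A (HP A).
Proof.
  intro m. exists (map letter_te m). split.
  - apply Forall_forall. intros h Hin. apply in_map_iff in Hin.
    destruct Hin as [[t|e] [<- _]]; apply HP_te.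
  - induction m as [|l m IH]; simpl; [apply sim_refl|].
    apply (sim_cat A [l]); [|exact IH].
    destruct l as [t|e]; [apply sim_inl_te|apply sim_sym, sim_cons_mone].
Qed.

Lemma HP_canonical_exists m : exists hs, canonical A (HP A) hs m.
Proof.
  set (L := chain_of_tnf (fst (normalize m)) (snd (normalize m))).
  destruct (chain_of_tnf_spec (snd (normalize m)) (fst (normalize m)) (nf_conds_normalize m))
    as [HL Hm].
  fold L in HL, Hm.
  assert (LN : L <> []) by (unfold L; destruct (snd (normalize m)) as [|[]]; discriminate).
  exists (map te L). split; [|split; [|split]].
  - destruct L; [contradiction|discriminate].
  - apply Forall_forall. intros h Hin. apply in_map_iff in Hin.
    destruct Hin as [p [<- _]]. apply HP_te.
  - apply sim_iff_normalize. rewrite normalize_chain, Hm by exact HL.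
    destruct (normalize m); reflexivity.
  - apply (canonical_links_chain _ L (represents_map_te L) LN). exact HL.
Qed.

Lemma HP_canonical_unique m hs hs' :
  canonical A (HP A) hs m -> canonical A (HP A) hs' m ->
  length hs = length hs' /\ forall i, i < length hs -> sim A (nth i hs []) (nth i hs' []).
Proof.
  intros H H'.
  destruct (canonical_HP_chain hs m H) as [L [HL [HLc Hm]]].
  destruct (canonical_HP_chain hs' m H') as [L' [HL' [HLc' Hm']]].
  assert (EL : L = L').
  { rewrite <- (chain_of_tnf_of_chain L HLc), <- (chain_of_tnf_of_chain L' HLc'), <- Hm, <- Hm'.
    reflexivity. }
  subst L'. apply Forall2_length in HL as Hlen. apply Forall2_length in HL' as Hlen'.
  split; [congruence|].
  intros i Hi. eapply sim_trans; [apply (represents_nth _ _ HL i Hi)|].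
  apply sim_sym, (represents_nth _ _ HL'). congruence.
Qed.

Lemma HP_proper : proper A (HP A).
Proof.
  intros h k [t [x Hh]] [s [y Hk]].
  change [inl t; inr x] with (te (t, x)) in Hh.
  change [inl s; inr y] with (te (s, y)) in Hk.
  split.
  - intros [Hst Hsg].
    rewrite (star_sim _ _ Hh), (star_sim _ _ Hk), !star_te in Hst.
    apply sim_inr_inj in Hst. subst y.
    apply tpart_sigma in Hsg. rewrite (tpart_sim _ _ Hh), (tpart_sim _ _ Hk) in Hsg.
    simpl in Hsg. rewrite !mone_r in Hsg. subst s.
    eapply sim_trans; [exact Hh|apply sim_sym, Hk].
  - intro H. split; [rewrite (star_sim _ _ H); apply sim_refl|apply sg_sim, H].
Qed.

Lemma canonical_HP_plus alpha hs : canonical A (HP A) hs alpha ->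
  sim A (plus A alpha) (plus A (hd [] hs)).
Proof.
  intro Hc. destruct (canonical_HP_chain hs alpha Hc) as [L [HL [HLc Hm]]].
  destruct HL as [|h1 [s1 f1] hs L Hh1 _]; [contradiction|].
  unfold plus. rewrite wplus_normalize, Hm, tnf_plus_chain by exact HLc.
  cbn [hd]. rewrite (wplus_sim _ _ Hh1). unfold wplus, te; simpl. rewrite sop_one_r. apply sim_refl.
Qed.

Lemma canonical_HP_star alpha hs : canonical A (HP A) hs alpha ->
  sim A (star A alpha) (star A (last hs [])).
Proof.
  intro Hc. destruct (canonical_HP_chain hs alpha Hc) as [L [HL [HLc Hm]]].
  assert (LN : L <> []) by (destruct L; [contradiction|discriminate]).
  rewrite star_normalize, Hm, star_val_chain by exact HLc.
  rewrite (star_sim _ _ (represents_last hs L HL LN)).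
  destruct (last L (mone, sone)) as [sl fl]. rewrite star_te. apply sim_refl.
Qed.

End Ehresmann.

Theorem mainTheorem14 (T : Monoid) (X : Semilattice) (A : OPAction T X) :
  proper_basis A (HP A) /\
  (forall (alpha : word (T:=T) (X:=X)) (hs : list word),
     canonical A (HP A) hs alpha ->
     sim A (plus A alpha) (plus A (hd [] hs)) /\
     sim A (star A alpha) (star A (last hs []))).
Proof.
  split.
  - split; [split; [apply HP_atomic|split; [apply HP_generating|]]|apply HP_proper].
    intro m. split; [apply HP_canonical_exists|intros hs hs'; apply HP_canonical_unique].
  - intros alpha hs Hc. split; [apply canonical_HP_plus|apply canonical_HP_star]; exact Hc.
Qed.
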